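(* Consider the PSFJ dynamics with period $p$ described in the context, and suppose the temporal graph $\mathcal G_0^{p}$ is a weakly defected temporal graph. Then the system is exponentially stable with growth factor and decay rate \[ c=\frac{1}{\|\Phi(p,0)\|^{p}},\qquad \gamma=\sqrt[p]{\|\Phi(p,0)\|}, \] i.e., $\|\Phi(t,\tau)\|\le c\gamma^{t-\tau}$ for all $t\ge\tau\ge0$. Moreover, for every initial condition the $\omega$-limit set contains at most $p$ points, independent of the initial condition, namely among \[ \mathbf x_l^*=(I-M_l)^{-1}N_l\,\mathbf s,\qquad l=1,\dots,p . \]
   Context: There are $n$ agents $\mathcal V=\{\mathrm v_1,\dots,\mathrm v_n\}$ with opinions $\mathbf x[t]$ and innate opinions $\mathbf s\in[0,1]^n$. Trust-based model: given adjacency $A[t]\in\{0,1\}^{n\times n}$ with neighbor sets $\mathcal N_i[t]=\{\mathrm v_j:a_{ij}[t]=1\}$ and a fixed row-stochastic trust matrix $\hat W$, $w_{ij}[t]=a_{ij}[t]\hat w_{ij}/\sum_{k\in\mathcal N_i[t]}a_{ik}[t]\hat w_{ik}$ and $\lambda_i[t]=f_i(\mathcal N_i[t])$ with fixed $f_i:2^{\mathcal V}\to[0,1]$, $f_i(\emptyset)=0$. Standing assumptions: $\lambda_i[t]=0$ iff $w_{ij}[t]=0$ for all $j$; no $\Lambda[t]$ is identically zero. PSFJ: adjacency matrices $A_1,\dots,A_p$ with $A[t]=A_{\langle t\rangle_p}$, $\langle t\rangle_p=(t\bmod p)+1$, each $A_l$ determining $(W_l,\Lambda_l)$; dynamics $\mathbf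 x[t+1]=\Lambda_{\langle t\rangle_p}W_{\langle t\rangle_p}\mathbf x[t]+(I-\Lambda_{\langle t\rangle_p})\mathbf s$. State transition matrix $\Phi(t,\tau)=\Lambda[t-1]W[t-1]\cdots\Lambda[\tau]W[\tau]$ ($\Phi(\tau,\tau)=I$) with $\Lambda[t]=\Lambda_{\langle t\rangle_p}$, $W[t]=W_{\langle t\rangle_p}$; norm $\|A\|:=\max_i\sum_j|a_{ij}|$. For $l\in\{1,\dots,p\}$ let $m_j=((l-1+j)\bmod p)+1$, $M_l=\Lambda_{m_{p-1}}W_{m_{p-1}}\cdots\Lambda_{m_0}W_{m_0}$ and $N_l=\sum_{j=0}^{p-1}(\Lambda_{m_{p-1}}W_{m_{p-1}}\cdots\Lambda_{m_{j+1}}W_{m_{j+1}})(I-\Lambda_{m_j})$ (empty product $=I$). The $\omega$-limit set of a trajectory is the set of its accumulation points. Graphs: $\mathcal G[t]$ has directed edge $(\mathrm v_j,\mathrm v_i)$ iff $w_{ij}[t]>0$; $\mathcal G_0^p=\{\mathcal G[k]\}_{k=0}^p$. A temporal path is a sequence of edges $(\mathrm v_j,\mathrm v_{i_1},t_{k_0}),\dots,(\mathrm v_{i_m},\mathrm v_i,t_{k_m})$ at successive time steps. Agent $\mathrm v_i$ is stubborn at time $t$ if $\lambda_i[t]<1$; an $s$-path starts at a stubborn agent. $\mathcal G_0^p$ is a weakly defected temporal graph (WDTG) if there is $k\in[0,p)$ such that in layer $\mathcal G[k]$ every agent is either stubborn or connected to a stubborn agent via a finite $s$-path entirely contained in $[0,p)$.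 *)

From HB Require Import structures.
From mathcomp Require Import all_boot all_order all_algebra.
From mathcomp Require Import all_classical all_reals exp.
Set Implicit Arguments. Unset Strict Implicit. Unset Printing Implicit Defensive.
Import Order.TTheory GRing.Theory Num.Theory.
Local Open Scope ring_scope.

Definition mxnorm (R : realType) (m k : nat) (M : 'M[R]_(m, k)) : R :=
  \big[Num.max/0]_(i < m) \sum_(j < k) `|M i j|.

Definition nbrs (n : nat) (A : 'I_n -> 'I_n -> bool) (i : 'I_n) : {set 'I_n} :=
  [set j | A i j].

(* w_ij = a_ij hat w_ij / sum_{k in N_i} a_ik hat w_ik (0 if the sum is 0). *)
Definition Wmat (R : realType) (n : nat) (What : 'M[R]_n)
  (A : 'I_n -> 'I_n -> bool) : 'M[R]_n :=
  \matrix_(i, j) ((if A i j then What i j else 0) /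
                  (\sum_(k < n | A i k) What i k)).

Definition Lam (R : realType) (n : nat) (f : 'I_n -> {set 'I_n} -> R)
  (A : 'I_n -> 'I_n -> bool) : 'M[R]_n :=
  diag_mx (\row_i f i (nbrs A i)).

(* The PSFJ system.  Adjacency matrices are given 0-indexed: Aseq l, l < p,
   is the paper's A_{l+1}; at time t the active one is Aseq (t %% p)%N,
   i.e. the paper's A_{<t>_p}. *)
Definition Lt (R : realType) (n p : nat) (What : 'M[R]_n)
  (f : 'I_n -> {set 'I_n} -> R) (Aseq : nat -> 'I_n -> 'I_n -> bool) (t : nat)
  : 'M[R]_n := Lam f (Aseq (t %% p)%N).

Definition Wt (R : realType) (n p : nat) (What : 'M[R]_n)
  (Aseq : nat -> 'I_n -> 'I_n -> bool) (t : nat) : 'M[R]_n :=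
  Wmat What (Aseq (t %% p)%N).

Fixpoint PhiN (R : realType) (n p : nat) (What : 'M[R]_n)
  (f : 'I_n -> {set 'I_n} -> R) (Aseq : nat -> 'I_n -> 'I_n -> bool)
  (d tau : nat) : 'M[R]_n :=
  match d with
  | 0 => 1%:M
  | d'.+1 => (Lt p What f Aseq (tau + d')%N *m Wt p What Aseq (tau + d')%N)
             *m PhiN p What f Aseq d' tau
  end.

Definition Phi (R : realType) (n p : nat) (What : 'M[R]_n)
  (f : 'I_n -> {set 'I_n} -> R) (Aseq : nat -> 'I_n -> 'I_n -> bool)
  (t tau : nat) : 'M[R]_n := PhiN p What f Aseq (t - tau) tau.

(* M_l and N_l (0-indexed: Mcyc l is the paper's M_{l+1}, m_j = (l+j) mod p). *)
Definition Mcyc (R : realType) (n p : nat) (What : 'M[R]_n)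
  (f : 'I_n -> {set 'I_n} -> R) (Aseq : nat -> 'I_n -> 'I_n -> bool)
  (l : nat) : 'M[R]_n := PhiN p What f Aseq p l.

Definition Ncyc (R : realType) (n p : nat) (What : 'M[R]_n)
  (f : 'I_n -> {set 'I_n} -> R) (Aseq : nat -> 'I_n -> 'I_n -> bool)
  (l : nat) : 'M[R]_n :=
  \sum_(j < p) (PhiN p What f Aseq (p - 1 - j)%N (l + j + 1)%N
                 *m (1%:M - Lt p What f Aseq (l + j)%N)).

Fixpoint traj (R : realType) (n p : nat) (What : 'M[R]_n)
  (f : 'I_n -> {set 'I_n} -> R) (Aseq : nat -> 'I_n -> 'I_n -> bool)
  (s x0 : 'cV[R]_n) (t : nat) : 'cV[R]_n :=
  match t with
  | 0 => x0
  | t'.+1 => (Lt p What f Aseq t' *m Wt p What Aseq t') *m traj p What f Aseq s x0 t'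
             + (1%:M - Lt p What f Aseq t') *m s
  end.

Definition omega_limit_pt (R : realType) (n : nat) (x : nat -> 'cV[R]_n)
  (y : 'cV[R]_n) : Prop :=
  forall eps : R, 0 < eps -> forall N : nat, exists t : nat,
    (N <= t)%N /\ mxnorm (x t - y) < eps.

Definition stubborn (R : realType) (n p : nat) (What : 'M[R]_n)
  (f : 'I_n -> {set 'I_n} -> R) (Aseq : nat -> 'I_n -> 'I_n -> bool)
  (i : 'I_n) (t : nat) : Prop :=
  Lt p What f Aseq t i i < 1.

Definition tedge (R : realType) (n p : nat) (What : 'M[R]_n)
  (Aseq : nat -> 'I_n -> 'I_n -> bool) (j i : 'I_n) (t : nat) : Prop :=
  0 < Wt p What Aseq t i j.

(* Finite s-path contained in [0,p) ending at agent i with its last edge at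
   time k: a source v 0 stubborn at time t0 >= 0, followed by edges
   (v r, v (r+1), t0 + r + 1), r < m, at successive time steps, the last one
   at time t0 + m = k. *)
Definition s_path_to (R : realType) (n p : nat) (What : 'M[R]_n)
  (f : 'I_n -> {set 'I_n} -> R) (Aseq : nat -> 'I_n -> 'I_n -> bool)
  (i : 'I_n) (k : nat) : Prop :=
  exists (m t0 : nat) (v : nat -> 'I_n),
    [/\ (0 < m)%N, (t0 + m)%N = k, (k < p)%N, v m = i &
        stubborn p What f Aseq (v 0%N) t0] /\
        (forall r : nat, (r < m)%N -> tedge p What Aseq (v r) (v r.+1) (t0 + r.+1)%N).

Definition WDTG (R : realType) (n p : nat) (What : 'M[R]_n)
  (f : 'I_n -> {set 'I_n} -> R) (Aseq : nat -> 'I_n -> 'I_n -> bool) : Prop :=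
  exists k : nat, (k < p)%N /\
    forall i : 'I_n, stubborn p What f Aseq i k \/ s_path_to p What f Aseq i k.

From HB Require Import structures.
From mathcomp Require Import all_boot all_order all_algebra.
From mathcomp Require Import all_classical all_reals exp.
From mathcomp Require Import topology normedtype sequences zify.
Import Order.TTheory GRing.Theory Num.Theory.
Set Implicit Arguments. Unset Strict Implicit. Unset Printing Implicit Defensive.
Local Open Scope ring_scope.

(* The one-step matrices Lambda[t] W[t] are substochastic (nonnegative, row sums
   at most 1), hence so is every Phi(t, tau).  Row i of Phi(k+1, 0) sums to less
   than 1 when agent i is stubborn at time k, and such a deficit is passed on
   along temporal edges, hence along s-paths; so the WDTG layer k makes every row
   sum of Phi(k+1, 0), and with it rho = ||Phi(p, 0)||, smaller than 1.
   Periodicity then gives ||Phi(t, tau)|| <= rho^(floor((t - tau)/p) - 1), which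
   is below c gamma^(t - tau).  Each M_l is a rotation XY of a factorisation
   Phi(p, 0) = YX, so M_l has no nonzero fixed vector and I - M_l is invertible.
   Sampled at the times l + kp the trajectory follows x <- M_l x + N_l s, whose
   distance to the fixed point x_l^* decays like rho^k: an accumulation point is
   arbitrarily close to one of the finitely many x_l^*, hence equal to one. *)

Section MaxRowSumNorm.
Variable R : realType.

Lemma mxnorm_ge0 m k (A : 'M[R]_(m, k)) : 0 <= mxnorm A.
Proof.
rewrite /mxnorm; elim/big_ind: _ => // [x y x0 _|i _]; first by rewrite le_max x0.
exact: sumr_ge0.
Qed.

Lemma row_le_mxnorm m k (A : 'M[R]_(m, k)) i : \sum_j `|A i j| <= mxnorm A.
Proof. by rewrite /mxnorm (bigD1 i) //= le_max lexx. Qed.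

Lemma mxnorm_le m k (A : 'M[R]_(m, k)) b :
  0 <= b -> (forall i, \sum_j `|A i j| <= b) -> mxnorm A <= b.
Proof.
move=> b0 Ab; rewrite /mxnorm; elim/big_ind: _ => // x y xb yb.
by rewrite ge_max xb.
Qed.

Lemma mxnorm_lt m k (A : 'M[R]_(m, k)) b :
  0 < b -> (forall i, \sum_j `|A i j| < b) -> mxnorm A < b.
Proof.
move=> b0 Ab; rewrite /mxnorm; elim/big_ind: _ => // x y xb yb.
by rewrite gt_max xb.
Qed.

Lemma mxnorm_mulmx m k l (A : 'M[R]_(m, k)) (B : 'M[R]_(k, l)) :
  mxnorm (A *m B) <= mxnorm A * mxnorm B.
Proof.
apply: mxnorm_le => [|i]; first by rewrite mulr_ge0 ?mxnorm_ge0.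
apply: (@le_trans _ _ (\sum_j \sum_q `|A i q| * `|B q j|)).
  apply: ler_sum => j _; rewrite mxE; apply: (le_trans (ler_norm_sum _ _ _)).
  by apply: ler_sum => q _; rewrite normrM.
rewrite exchange_big /= (@le_trans _ _ (\sum_q `|A i q| * mxnorm B)) //.
  by apply: ler_sum => q _; rewrite -mulr_sumr ler_wpM2l ?row_le_mxnorm.
by rewrite -mulr_suml ler_wpM2r ?mxnorm_ge0 ?row_le_mxnorm.
Qed.

Lemma mxnorm_add m k (A B : 'M[R]_(m, k)) : mxnorm (A + B) <= mxnorm A + mxnorm B.
Proof.
apply: mxnorm_le => [|i]; first by rewrite addr_ge0 ?mxnorm_ge0.
apply: (@le_trans _ _ (\sum_j (`|A i j| + `|B i j|))).
  by apply: ler_sum => j _; rewrite mxE ler_normD.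
by rewrite big_split lerD ?row_le_mxnorm.
Qed.

Lemma mxnorm_opp m k (A : 'M[R]_(m, k)) : mxnorm (- A) = mxnorm A.
Proof. by apply: eq_bigr => i _; apply: eq_bigr => j _; rewrite mxE normrN. Qed.

Lemma mxnorm_eq0 m k (A : 'M[R]_(m, k)) : mxnorm A = 0 -> A = 0.
Proof.
move=> A0; apply/matrixP => i j; rewrite mxE; apply/eqP.
rewrite -normr_eq0 eq_le normr_ge0 andbT -A0 (le_trans _ (row_le_mxnorm A i)) //.
by rewrite (bigD1 j) //= lerDl sumr_ge0.
Qed.

Lemma fixed_eq0_of_mxnorm_lt1 m (A : 'M[R]_m) (v : 'cV[R]_m) :
  mxnorm A < 1 -> A *m v = v -> v = 0.
Proof.
move=> A1 Av; apply/mxnorm_eq0/eqP; rewrite eq_le mxnorm_ge0 andbT.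
have : mxnorm v * (1 - mxnorm A) <= 0.
  by rewrite mulrBr mulr1 subr_le0 mulrC -{1}Av mxnorm_mulmx.
by rewrite pmulr_lle0 // subr_gt0.
Qed.

End MaxRowSumNorm.

Section Substochastic.
Variable R : realType.

Definition substochastic m k (A : 'M[R]_(m, k)) : Prop :=
  (forall i j, 0 <= A i j) /\ (forall i, \sum_j A i j <= 1).

Lemma substochastic1 m : substochastic (1%:M : 'M[R]_m).
Proof.
split=> [i j|i]; first by rewrite mxE; case: (i == j).
rewrite (bigD1 i) //= big1 ?addr0; first by rewrite mxE eqxx.
by move=> j /negbTE; rewrite mxE eq_sym => ->.
Qed.

Lemma rowsum_mulmx m k l (A : 'M[R]_(m, k)) (B : 'M[R]_(k, l)) i :
  \sum_j (A *m B) i j = \sum_q A i q * \sum_j B q j.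
Proof.
under eq_bigr => j _ do rewrite mxE.
by rewrite exchange_big; apply: eq_bigr => q _; rewrite mulr_sumr.
Qed.

Lemma rowsum_mulmx_le m k l (A : 'M[R]_(m, k)) (B : 'M[R]_(k, l)) i :
  (forall i q, 0 <= A i q) -> substochastic B ->
  \sum_j (A *m B) i j <= \sum_q A i q.
Proof.
move=> A0 [_ B1]; rewrite rowsum_mulmx.
by apply: ler_sum => q _; rewrite ler_piMr.
Qed.

Lemma rowsum_mulmx_lt m k l (A : 'M[R]_(m, k)) (B : 'M[R]_(k, l)) i q :
  substochastic A -> substochastic B -> 0 < A i q -> \sum_j B q j < 1 ->
  \sum_j (A *m B) i j < 1.
Proof.
move=> [A0 A1] [_ B1] Aiq Bq; rewrite rowsum_mulmx (lt_le_trans _ (A1 i)) //.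
rewrite [X in _ < X](bigD1 q) //= [X in X < _](bigD1 q) //=.
by rewrite ltr_leD ?gtr_pMr //; apply: ler_sum => r _; rewrite ler_piMr.
Qed.

Lemma substochastic_mulmx m k l (A : 'M[R]_(m, k)) (B : 'M[R]_(k, l)) :
  substochastic A -> substochastic B -> substochastic (A *m B).
Proof.
move=> [A0 A1] sB; have [B0 _] := sB; split=> [i j|i].
  by rewrite mxE sumr_ge0 // => q _; rewrite mulr_ge0.
exact: le_trans (rowsum_mulmx_le i A0 sB) (A1 i).
Qed.

Lemma mxnorm_substochastic m k (A : 'M[R]_(m, k)) :
  substochastic A -> mxnorm A <= 1.
Proof.
move=> [A0 A1]; apply: mxnorm_le => // i.
by rewrite (eq_bigr (A i)) // => j _; rewrite ger0_norm.
Qed.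

Lemma mxnorm_substochastic_lt1 m k (A : 'M[R]_(m, k)) :
  substochastic A -> (forall i, \sum_j A i j < 1) -> mxnorm A < 1.
Proof.
move=> [A0 _] A1; apply: mxnorm_lt => // i.
by rewrite (eq_bigr (A i)) // => j _; rewrite ger0_norm.
Qed.

End Substochastic.

Section MatrixFixedPoints.
Variables (R : realType) (m : nat).

Lemma unitmx_1B_fixed_free (A : 'M[R]_m) :
  (forall v : 'cV[R]_m, A *m v = v -> v = 0) -> 1%:M - A \in unitmx.
Proof.
move=> Afree; rewrite unitmxE unitfE -det_tr; apply/negP => /det0P [v v0].
move/(congr1 trmx); rewrite trmx_mul trmxK trmx0 mulmxBl mul1mx => /eqP.
rewrite subr_eq0 => /eqP/esym/Afree vT0.
by move: v0; rewrite -(trmxK v) vT0 trmx0 eqxx.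
Qed.

Lemma fixed_free_mulmxC (A B : 'M[R]_m) :
  (forall u : 'cV[R]_m, A *m B *m u = u -> u = 0) ->
  forall v : 'cV[R]_m, B *m A *m v = v -> v = 0.
Proof.
move=> ABfree v BAv; have ABAv : A *m B *m (A *m v) = A *m v.
  by rewrite -!mulmxA (mulmxA B) BAv.
by rewrite -BAv -mulmxA (ABfree _ ABAv) mulmx0.
Qed.

Lemma invmx_1B_fixed (A : 'M[R]_m) (b : 'cV[R]_m) :
  1%:M - A \in unitmx -> invmx (1%:M - A) *m b = A *m (invmx (1%:M - A) *m b) + b.
Proof.
move=> Aunit; set v := invmx _ *m b.
have : (1%:M - A) *m v = b by rewrite mulmxA mulmxV // mul1mx.
by rewrite mulmxBl mul1mx => /eqP; rewrite subr_eq addrC => /eqP.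
Qed.

End MatrixFixedPoints.

Lemma exists_mulr_expr_lt (R : realType) (C r eps : R) :
  0 <= r < 1 -> 0 < eps -> exists k : nat, C * r ^+ k < eps.
Proof.
move=> /andP[r0 r1] eps0; have r1' : `|r| < 1 by rewrite ger0_norm.
have [k _ Ck] := @cvgr0_norm_lt _ R^o _ _ _ _ (cvg_geometric C r1') _ eps0.
by exists k; apply: le_lt_trans (Ck k (leqnn k)); apply: ler_norm.
Qed.

Lemma exists_eq0_of_small (R : realType) (D : nat -> R) m :
  (forall l, 0 <= D l) ->
  (forall eps, 0 < eps -> exists2 l, (l < m)%N & D l < eps) ->
  exists2 l, (l < m)%N & D l = 0.
Proof.
move=> D0; elim: m => [|m IHm] Dsmall; first by have [] := Dsmall 1 ltr01.
have [Dm0|Dm0] := eqVneq (D m) 0; first by exists m.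
have Dm_gt0 : 0 < D m by rewrite lt_def Dm0 D0.
have [eps eps0|l lm Dl0] := IHm; last by exists l => //; apply: ltnW.
have [|l] := Dsmall (Num.min eps (D m)); first by rewrite lt_min eps0.
rewrite ltnS leq_eqVlt lt_min => /orP[/eqP->|lm]; first by rewrite ltxx andbF.
by case/andP; exists l.
Qed.

Lemma expr_floor_le_geometric (R : realType) (r : R) (p k : nat) :
  0 < r <= 1 -> (0 < p)%N ->
  r ^+ (k %/ p).-1 <= (r ^+ p)^-1 * powR r p%:R^-1 ^+ k.
Proof.
move=> r01 p0; have /andP[r0 _] := r01.
have p0R : (0 : R) < p%:R by rewrite ltr0n.
rewrite mulrC ler_pdivlMr ?exprn_gt0 // -exprD -(powR_mulrn _ (ltW r0)).
rewrite -(powR_mulrn _ (powR_ge0 _ _)) -powRrM; apply: ger_powR => //.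
rewrite mulrC ler_pdivrMr // -natrM ler_nat.
have := divn_eq k p; have := ltn_pmod k p0.
case: (k %/ p)%N => [|q] /=; nia.
Qed.

Section PSFJ.
Variables (R : realType) (n p : nat) (What : 'M[R]_n)
  (f : 'I_n -> {set 'I_n} -> R) (Aseq : nat -> 'I_n -> 'I_n -> bool).

Local Notation L := (Lt p What f Aseq).
Local Notation W := (Wt p What Aseq).
Local Notation PN := (PhiN p What f Aseq).

Lemma Lt_congr t1 t2 : (t1 = t2 %[mod p])%N -> L t1 = L t2.
Proof. by rewrite /Lt => ->. Qed.

Lemma Wt_congr t1 t2 : (t1 = t2 %[mod p])%N -> W t1 = W t2.
Proof. by rewrite /Wt => ->. Qed.

Lemma PhiN_congr d t1 t2 : (t1 = t2 %[mod p])%N -> PN d t1 = PN d t2.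
Proof.
move=> t12; elim: d => //= d ->.
have t12d : (t1 + d = t2 + d %[mod p])%N by rewrite -modnDml t12 modnDml.
by rewrite (Lt_congr t12d) (Wt_congr t12d).
Qed.

Lemma PhiN_add a b tau : PN (a + b) tau = PN a (tau + b) *m PN b tau.
Proof.
elim: a => [|a IHa] /=; first by rewrite mul1mx.
by rewrite IHa !mulmxA -addnA (addnC b).
Qed.

Lemma PhiN_addnMl d tau k : PN d (tau + k * p) = PN d tau.
Proof. by apply: PhiN_congr; rewrite addnC modnMDl. Qed.

Lemma Mcyc_rotate l : (l <= p)%N ->
  Mcyc p What f Aseq l = PN l 0 *m PN (p - l) l.
Proof.
move=> lp; rewrite /Mcyc; have := PhiN_add l (p - l) l; rewrite subnKC // => ->.
by rewrite (@PhiN_congr _ p 0) // modnn mod0n.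
Qed.

Lemma unitmx_1BMcyc l : (l <= p)%N -> mxnorm (PN p 0) < 1 ->
  1%:M - Mcyc p What f Aseq l \in unitmx.
Proof.
move=> lp rho1; apply: unitmx_1B_fixed_free; rewrite Mcyc_rotate //.
apply: fixed_free_mulmxC => u; apply: fixed_eq0_of_mxnorm_lt1.
by have := PhiN_add (p - l) l 0; rewrite add0n subnK // => <-.
Qed.

Hypothesis What_ge0 : forall i j, 0 <= What i j.
Hypothesis f01 : forall i S, 0 <= f i S <= 1.

Lemma Wt_substochastic t : substochastic (W t).
Proof.
split=> [i j|i]; rewrite /Wt /Wmat.
  by rewrite mxE divr_ge0 ?sumr_ge0 //; case: ifP.
under eq_bigr => j _ do rewrite mxE.
rewrite -mulr_suml -big_mkcond /=.
set S := \sum_(j < n | _) _.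
by have [->|?] := eqVneq S 0; rewrite ?mul0r ?mulfV.
Qed.

Lemma Lt_diag01 t i : 0 <= L t i i <= 1.
Proof. by rewrite /Lt /Lam mxE eqxx mulr1n mxE. Qed.

Lemma LtWt_entry t i j : (L t *m W t) i j = L t i i * W t i j.
Proof. by rewrite /Lt /Lam mul_diag_mx !mxE eqxx mulr1n. Qed.

Lemma rowsum_LtWt t i : \sum_j (L t *m W t) i j <= L t i i.
Proof.
under eq_bigr => j _ do rewrite LtWt_entry.
have [_ W1] := Wt_substochastic t; have /andP[L0 _] := Lt_diag01 t i.
by rewrite -mulr_sumr ler_piMr.
Qed.

Lemma LtWt_substochastic t : substochastic (L t *m W t).
Proof.
split=> [i j|i].
  have [W0 _] := Wt_substochastic t; have /andP[L0 _] := Lt_diag01 t i.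
  by rewrite LtWt_entry mulr_ge0.
by rewrite (le_trans (rowsum_LtWt t i)) //; case/andP: (Lt_diag01 t i).
Qed.

Lemma PhiN_substochastic d tau : substochastic (PN d tau).
Proof.
elim: d => [|d IHd] /=; first exact: substochastic1.
exact: substochastic_mulmx (LtWt_substochastic _) IHd.
Qed.

Lemma mxnorm_PhiN_le1 d tau : mxnorm (PN d tau) <= 1.
Proof. exact/mxnorm_substochastic/PhiN_substochastic. Qed.

Lemma rowsum_PhiN_stubborn i t :
  stubborn p What f Aseq i t -> \sum_j PN t.+1 0 i j < 1.
Proof.
rewrite /stubborn /= add0n => Lt1; apply: le_lt_trans Lt1.
apply: le_trans (rowsum_LtWt t i).
apply: rowsum_mulmx_le (PhiN_substochastic t 0).
by case: (LtWt_substochastic t).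
Qed.

(* If i is not stubborn then lambda_i = 1, so the edge weight w_ij survives
   in Lambda W. *)
Lemma rowsum_PhiN_edge i j t : tedge p What Aseq j i t ->
  \sum_q PN t 0 j q < 1 -> \sum_q PN t.+1 0 i q < 1.
Proof.
move=> wij rowj; have [Lt1|L1] := ltP (L t i i) 1.
  exact: rowsum_PhiN_stubborn.
have Li1 : L t i i = 1.
  by apply/eqP; rewrite eq_le L1 andbT; case/andP: (Lt_diag01 t i).
rewrite /= add0n; apply: rowsum_mulmx_lt rowj.
- exact: LtWt_substochastic.
- exact: PhiN_substochastic.
- by rewrite LtWt_entry Li1 mul1r.
Qed.

Lemma rowsum_PhiN_s_path i k :
  s_path_to p What f Aseq i k -> \sum_j PN k.+1 0 i j < 1.
Proof.
case=> m [t0 [v [[_ <- _ <- v0_stub] edges]]].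
elim: m edges => [|r IHr] edges; first by rewrite addn0; apply: rowsum_PhiN_stubborn.
rewrite addnS; apply: (@rowsum_PhiN_edge _ (v r)); first by rewrite -addnS; apply: edges.
by apply: IHr => q qr; apply: edges; apply: ltnW.
Qed.

Lemma WDTG_mxnorm_lt1 : WDTG p What f Aseq -> mxnorm (PN p 0) < 1.
Proof.
case=> k [kp stub_or_path].
have rowsum_lt1 i : \sum_j PN k.+1 0 i j < 1.
  by case: (stub_or_path i) => [/rowsum_PhiN_stubborn|/rowsum_PhiN_s_path].
have := PhiN_add (p - k.+1) k.+1 0; rewrite subnK // add0n => ->.
apply: le_lt_trans (mxnorm_mulmx _ _) _.
apply: le_lt_trans (ler_wpM2r (mxnorm_ge0 _) (mxnorm_PhiN_le1 _ _)) _.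
by rewrite mul1r; apply: mxnorm_substochastic_lt1 (PhiN_substochastic _ _) _.
Qed.

Local Notation rho := (mxnorm (PN p 0)).

Lemma mxnorm_PhiN_periods q : mxnorm (PN (q * p) 0) <= rho ^+ q.
Proof.
elim: q => [|q IHq]; first by rewrite expr0 mxnorm_PhiN_le1.
rewrite mulSn PhiN_add add0n (@PhiN_congr _ (q * p) 0) ?modnMl ?mod0n //.
by apply: le_trans (mxnorm_mulmx _ _) _; rewrite exprS ler_pM ?mxnorm_ge0.
Qed.

Lemma mxnorm_PhiN0 d : mxnorm (PN d 0) <= rho ^+ (d %/ p).
Proof.
rewrite {1}(divn_eq d p) addnC PhiN_add add0n.
apply: le_trans (mxnorm_mulmx _ _) _; rewrite -[X in _ <= X]mul1r.
apply: ler_pM; rewrite ?mxnorm_ge0 ?mxnorm_PhiN_le1 //.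
exact: mxnorm_PhiN_periods.
Qed.

Hypothesis p_gt0 : (0 < p)%N.

(* After e <= p steps the start time is a multiple of p, and at least
   d %/ p - 1 whole periods remain. *)
Lemma mxnorm_PhiN d tau : mxnorm (PN d tau) <= rho ^+ (d %/ p).-1.
Proof.
set e := (p - tau %% p)%N; have ep : (e <= p)%N by apply: leq_subr.
have tau_e : (tau + e = 0 %[mod p])%N.
  have taup : (tau %% p <= p)%N by rewrite ltnW ?ltn_pmod.
  by rewrite mod0n {1}(divn_eq tau p) -addnA subnKC // -mulSnr modnMl.
have [de|ed] := ltnP d e.
  by rewrite divn_small ?(leq_trans de ep) // expr0 mxnorm_PhiN_le1.
rewrite -(subnK ed) PhiN_add (PhiN_congr _ tau_e).
apply: le_trans (mxnorm_mulmx _ _) _; rewrite -[X in _ <= X]mulr1.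
apply: ler_pM; rewrite ?mxnorm_ge0 ?mxnorm_PhiN_le1 //.
apply: le_trans (mxnorm_PhiN0 _) _.
apply: ler_wiXn2l; rewrite ?mxnorm_ge0 ?mxnorm_PhiN_le1 // subnK //.
by rewrite -subn1 -divnBMl mul1n leq_div2r // leq_sub2l.
Qed.

Variables s x0 : 'cV[R]_n.

Local Notation M := (Mcyc p What f Aseq).
Local Notation N := (Ncyc p What f Aseq).
Local Notation x := (traj p What f Aseq s x0).

Definition forced_resp d tau : 'M[R]_n :=
  \sum_(j < d) (PN (d - 1 - j) (tau + j + 1) *m (1%:M - L (tau + j))).

Definition xstar l : 'cV[R]_n := invmx (1%:M - M l) *m N l *m s.

Lemma traj_addn tau d : x (tau + d) = PN d tau *m x tau + forced_resp d tau *m s.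
Proof.
elim: d => [|d IHd]; first by rewrite addn0 /forced_resp big_ord0 mul0mx addr0 mul1mx.
rewrite addnS /= IHd /forced_resp big_ord_recr /=.
have -> : (d.+1 - 1 - d = 0)%N by rewrite subn1 subnn.
have -> : \sum_(j < d) PN (d.+1 - 1 - j) (tau + j + 1) *m (1%:M - L (tau + j))
    = L (tau + d) *m W (tau + d) *m
      \sum_(j < d) PN (d - 1 - j) (tau + j + 1) *m (1%:M - L (tau + j)).
  rewrite mulmx_sumr; apply: eq_bigr => j _; have jd := ltn_ord j.
  have -> : (d.+1 - 1 - j = (d - 1 - j).+1)%N by lia.
  by rewrite /= mulmxA (_ : (tau + j + 1 + (d - 1 - j) = tau + d)%N) //; lia.
by rewrite /= mul1mx mulmxDr !mulmxA [in RHS]mulmxDl addrA.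
Qed.

Lemma forced_resp_congr d t1 t2 :
  (t1 = t2 %[mod p])%N -> forced_resp d t1 = forced_resp d t2.
Proof.
move=> t12; have t12D k : (t1 + k = t2 + k %[mod p])%N by rewrite -modnDml t12 modnDml.
apply: eq_bigr => j _.
by rewrite -!addnA (PhiN_congr _ (t12D _)) (Lt_congr (t12D _)).
Qed.

Lemma traj_period l k : x (l + k.+1 * p) = M l *m x (l + k * p) + N l *m s.
Proof.
rewrite mulSnr addnA traj_addn PhiN_addnMl.
by rewrite (@forced_resp_congr _ (l + k * p) l) // addnC modnMDl.
Qed.

Lemma xstar_fixed l : 1%:M - M l \in unitmx -> xstar l = M l *m xstar l + N l *m s.
Proof. by rewrite /xstar -!mulmxA; apply: invmx_1B_fixed. Qed.

Lemma traj_period_sub_xstar l k : 1%:M - M l \in unitmx ->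
  x (l + k * p) - xstar l = PN (k * p) l *m (x l - xstar l).
Proof.
move=> Mu; elim: k => [|k IHk]; first by rewrite mul0n addn0 mul1mx.
rewrite traj_period {1}(xstar_fixed Mu) opprD addrACA subrr addr0 -mulmxBr IHk.
by rewrite mulmxA mulSn PhiN_add PhiN_addnMl.
Qed.

Lemma mxnorm_traj_sub_xstar t : 1%:M - M (t %% p) \in unitmx ->
  mxnorm (x t - xstar (t %% p))
    <= rho ^+ (t %/ p).-1 * mxnorm (x (t %% p) - xstar (t %% p)).
Proof.
move=> Mu; rewrite {1}(divn_eq t p) addnC traj_period_sub_xstar //.
apply: le_trans (mxnorm_mulmx _ _) _; apply: ler_wpM2r; first exact: mxnorm_ge0.
by have := mxnorm_PhiN (t %/ p * p) (t %% p); rewrite mulnK.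
Qed.

Lemma omega_limit_pt_xstar y : rho < 1 ->
  (forall l, (l < p)%N -> 1%:M - M l \in unitmx) ->
  omega_limit_pt x y -> exists2 l, (l < p)%N & y = xstar l.
Proof.
move=> rho1 Mu ylim.
set C := \sum_(l < p) mxnorm (x l - xstar l).
have C_ge (l : 'I_p) : mxnorm (x l - xstar l) <= C.
  by rewrite /C (bigD1 l) //= lerDl sumr_ge0 // => *; apply: mxnorm_ge0.
have rho01 : 0 <= rho < 1 by rewrite mxnorm_ge0.
have [l lp /mxnorm_eq0/eqP] : exists2 l, (l < p)%N & mxnorm (y - xstar l) = 0.
  apply: exists_eq0_of_small => [l|eps eps0]; first exact: mxnorm_ge0.
  have eps20 : 0 < eps / 2 by rewrite divr_gt0.
  have [K CK] := exists_mulr_expr_lt C rho01 eps20.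
  have [t [Kt xty]] := ylim _ eps20 (K.+1 * p)%N.
  have tp : (t %% p < p)%N by rewrite ltn_pmod.
  exists (t %% p)%N => //.
  have xt_near : mxnorm (x t - xstar (t %% p)) < eps / 2.
    apply: le_lt_trans (mxnorm_traj_sub_xstar (Mu _ tp)) _.
    apply: le_lt_trans CK; rewrite mulrC ler_pM ?exprn_ge0 ?mxnorm_ge0 //.
      by rewrite (C_ge (Ordinal tp)).
    apply: ler_wiXn2l; rewrite ?mxnorm_ge0 ?ltW //.
    by rewrite -ltnS (leq_trans _ (leqSpred _)) // leq_divRL.
  have -> : y - xstar (t %% p) = (x t - xstar (t %% p)) - (x t - y).
    by rewrite [RHS]addrC opprB addrA subrK.
  apply: le_lt_trans (mxnorm_add _ _) _.
  by rewrite mxnorm_opp [eps]splitr ltrD.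
by rewrite subr_eq0 => /eqP ->; exists l.
Qed.

End PSFJ.

Theorem theorem5 (R : realType) (n p : nat) (What : 'M[R]_n)
  (f : 'I_n -> {set 'I_n} -> R) (Aseq : nat -> 'I_n -> 'I_n -> bool)
  (s : 'cV[R]_n) :
  (0 < p)%N ->
  (* hat W is row-stochastic *)
  (forall i j, 0 <= What i j) ->
  (forall i, \sum_(j < n) What i j = 1) ->
  (* f_i : 2^V -> [0,1], f_i(emptyset) = 0 *)
  (forall i S, 0 <= f i S <= 1) ->
  (forall i, f i (@finset.set0 _) = 0) ->
  (* innate opinions in [0,1]^n *)
  (forall i, 0 <= s i 0 <= 1) ->
  (* standing assumptions *)
  (forall l i, (l < p)%N ->
     (f i (nbrs (Aseq l) i) = 0 <-> forall j, Wmat What (Aseq l) i j = 0)) ->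
  (forall l, (l < p)%N -> Lam f (Aseq l) != 0) ->
  (* G_0^p is a weakly defected temporal graph *)
  WDTG p What f Aseq ->
  let rho := mxnorm (Phi p What f Aseq p 0) in
  let c := (rho ^+ p)^-1 in
  let gamma := powR rho (p%:R^-1) in
  [/\ rho < 1,
      (0 < rho -> forall t tau : nat, (tau <= t)%N ->
         mxnorm (Phi p What f Aseq t tau) <= c * gamma ^+ (t - tau)),
      (forall l, (l < p)%N -> 1%:M - Mcyc p What f Aseq l \in unitmx) &
      (forall (x0 y : 'cV[R]_n), omega_limit_pt (traj p What f Aseq s x0) y ->
         exists2 l, (l < p)%N &
           y = invmx (1%:M - Mcyc p What f Aseq l) *m Ncyc p What f Aseq l *m s)].
Proof.
move=> p_gt0 What_ge0 _ f01 _ _ _ _ wdtg rho c gamma.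
have rhoE : rho = mxnorm (PhiN p What f Aseq p 0) by rewrite /rho /Phi subn0.
have rho1 : rho < 1 by rewrite rhoE; apply: WDTG_mxnorm_lt1.
have Mu l : (l < p)%N -> 1%:M - Mcyc p What f Aseq l \in unitmx.
  by move=> lp; apply: unitmx_1BMcyc; rewrite -?rhoE // ltnW.
split=> // [rho_gt0 t tau _|x0 y ylim]; last first.
  by apply: omega_limit_pt_xstar ylim; rewrite -?rhoE.
apply: le_trans (mxnorm_PhiN Aseq What_ge0 f01 p_gt0 _ _) _.
by rewrite -rhoE /c /gamma; apply: expr_floor_le_geometric; rewrite ?rho_gt0 ?ltW.
Qed.
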